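(* Let $(M_k)_{k\in\mathbb{N}}$ be the sequence of matrices of a directive sequence and let $v\in\mathbb{R}_+^{d+1}$ have a totally irrational direction and satisfy $\bigcap_{n\in\mathbb{N}}M_{[0,n)}\mathbb{R}_+^{d+1}=\mathbb{R}_+v$. Then for every $k\in\mathbb{N}$ there exists $n\ge k$ such that $M_{[k,n)}>0$ (all entries positive).
   Context: $S$ is a finite set of unimodular substitutions on $A=\{0,\dots,d\}$; for a directive sequence $s=(s_k)\in S^{\mathbb{N}}$, $M_k=\mathrm{ab}(s_k)$ is the (non-negative integer, invertible) abelianization matrix of $s_k$, and $M_{[k,n)}=M_k\cdots M_{n-1}$. A vector $v\in\mathbb{R}_+^{d+1}$ has a totally irrational direction if its coordinates are linearly independent over $\mathbb{Q}$. *)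

From HB Require Import structures.
From mathcomp Require Import all_boot all_order all_algebra.
From mathcomp Require Import reals.
Set Implicit Arguments. Unset Strict Implicit. Unset Printing Implicit Defensive.
Import Order.TTheory GRing.Theory Num.Theory.
Local Open Scope ring_scope.

Definition subst (d : nat) := {ffun 'I_d.+1 -> seq 'I_d.+1}.

Definition ab (d : nat) (sigma : subst d) : 'M[int]_d.+1 :=
  \matrix_(i, j) ((count_mem i (sigma j))%:Z).

Definition unimodular (d : nat) (sigma : subst d) : Prop :=
  \det (ab sigma) = 1 \/ \det (ab sigma) = -1.

(* M_[k,n) = M_k * ... * M_{n-1} (identity if n <= k) *)
Definition Mprod (d : nat) (s : nat -> subst d) (k n : nat) : 'M[int]_d.+1 :=
  \prod_(k <= i < n) ab (s i).

Definition nonneg_vec (R : realType) (n : nat) (x : 'cV[R]_n) : Prop :=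
  forall i, 0 <= x i 0.

Definition in_cone (R : realType) (n : nat) (A : 'M[R]_n) (y : 'cV[R]_n) : Prop :=
  exists x : 'cV[R]_n, nonneg_vec x /\ y = A *m x.

Definition totally_irrational (R : realType) (n : nat) (v : 'cV[R]_n) : Prop :=
  forall q : 'I_n -> rat, \sum_i ratr (q i) * v i 0 = 0 -> forall i, q i = 0.

Definition positive_mx (n : nat) (A : 'M[int]_n) : Prop :=
  forall i j, 0 < A i j.

From HB Require Import structures.
From mathcomp Require Import all_boot all_order all_algebra.
From mathcomp Require Import reals.
From mathcomp Require Import boolp classical_sets topology normedtype.

(* Suppose that for some k no M_[k,n) is positive.  By pigeonhole, some fixed
   row i of M_[k,n) contains a zero for infinitely many n.  A zero entry (i,j)
   of M_[k,m) puts the normalised j-th column of M_[k,m) on the face {y_i = 0}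
   of every cone M_[k,n) R_+^{d+1} with k <= n <= m, and compactness of the
   simplex yields a nonzero y >= 0 with y_i = 0 lying in all these cones.
   Then M_[0,k) y lies in every cone M_[0,n) R_+^{d+1}, hence is a positive
   multiple of v, so v = M_[0,k) x with x_i = 0.  Applying the adjugate of the
   unimodular integer matrix M_[0,k) turns x_i = 0 into a rational linear
   relation between the coordinates of v with a nonzero coefficient row,
   contradicting total irrationality. *)

Set Implicit Arguments.
Unset Strict Implicit.
Unset Printing Implicit Defensive.

Import Order.TTheory GRing.Theory Num.Theory.
Import numFieldNormedType.Exports.
Local Open Scope ring_scope.
Local Open Scope classical_set_scope.

Lemma compact_decreasing_bigcap (T : ptopologicalType) (K : set T) (F : nat -> set T) :
  compact K -> (forall n, closed (F n)) ->
  (forall m n, (m <= n)%N -> F n `<=` F m) -> (forall n, K `&` F n !=set0) ->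
  K `&` \bigcap_n F n !=set0.
Proof.
move=> Kco Fcl Fdecr Fne.
move: Kco; rewrite compact_In0 => /(_ nat setT (fun n => K `&` F n)).
case.
- by exists F => // n _; rewrite setIC.
- move=> D _; pose m := \max_(n <- finmap.enum_fset D) n.
  have [y [Ky Fmy]] := Fne m; exists y => n nD; split => //.
  by apply: Fdecr Fmy; apply: leq_bigmax_seq.
move=> y Hy; exists y; split; first by have [] := Hy 0%N I.
by move=> n _; have [] := Hy n I.
Qed.

Lemma trmx_continuous (K : numFieldType) m n : continuous (@trmx K m n).
Proof.
move=> M s /= /nbhs_ballP [e e0 es]; apply/nbhs_ballP; exists e => // N [_ MN].
by apply: es; split => // i j; rewrite !mxE; apply: MN.
Qed.

Lemma continuous_lincomb (R : realType) n (c : 'I_n -> R) :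
  continuous (fun x : 'cV[R]_n => \sum_l c l * x l 0).
Proof.
apply: (@continuous_big _ _ +%R 0 predT _ _ _ (fun l (x : 'cV[R]_n) => c l * x l 0)).
  exact: add_continuous.
move=> l _ x; apply: continuousM; first exact: cst_continuous.
exact: coord_continuous.
Qed.

Definition simplex (R : realType) n :=
  [set x : 'cV[R]_n | nonneg_vec x /\ \sum_i x i 0 = 1].

Lemma simplex_compact (R : realType) n : compact (@simplex R n).
Proof.
pose cube := [set x : 'rV[R]_n | forall i, `[0, 1] (x ord0 i)].
apply: (@subclosed_compact _ _ (trmx @` cube)).
- have -> : @simplex R n = \bigcap_i [set x | 0 <= x i 0]
     `&` [set x | \sum_i (fun=> 1) i * x i 0 = 1].
    apply/seteqP; split=> x /= [x0 x1]; (split; [by move=> i *; apply: x0 |]);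
      by rewrite -[RHS]x1; apply: eq_bigr => i _; rewrite mul1r.
  apply: (@closedI _ (\bigcap_i _)).
    apply: closed_bigI => i _.
    by apply: (@preimage_closed _ _ (fun x : 'cV[R]_n => x i 0) [set r | 0 <= r]);
      [move=> x _; apply: coord_continuous | apply: closed_ge].
  by apply: (@preimage_closed _ _ (fun x : 'cV[R]_n => \sum_i 1 * x i 0) [set r | r = 1]);
    [move=> x _; apply: continuous_lincomb | apply: closed_eq].
- apply: (@continuous_compact _ _ (@trmx R 1 n)).
    exact: continuous_subspaceT (@trmx_continuous _ _ _).
  by apply: (@rV_compact _ _ (fun=> `[0 : R, 1])) => _; apply: segment_compact.
- move=> x [x0 x1]; exists x^T; last by rewrite trmxK.
  move=> i; rewrite /= in_itv /= !mxE x0 /= -x1 (bigD1 i) //= lerDl.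
  by apply: sumr_ge0 => l _; apply: x0.
Qed.

Section Cones.
Variables (R : realType) (n : nat).
Implicit Types (A B : 'M[R]_n) (x y : 'cV[R]_n).

Lemma nonneg_mulmx B x :
  (forall i j, 0 <= B i j) -> nonneg_vec x -> nonneg_vec (B *m x).
Proof.
by move=> B0 x0 i; rewrite mxE; apply: sumr_ge0 => l _; apply: mulr_ge0.
Qed.

Lemma in_cone_unitmxE A y : A \in unitmx -> in_cone A y <-> nonneg_vec (invmx A *m y).
Proof.
move=> Aunit; split => [[x [x0 ->]]|y0]; first by rewrite mulKmx.
by exists (invmx A *m y); rewrite mulKVmx.
Qed.

Lemma in_cone_mulmxr A B y :
  (forall i j, 0 <= B i j) -> in_cone (A *m B) y -> in_cone A y.
Proof.
move=> B0 [x [x0 ->]]; exists (B *m x); rewrite mulmxA.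
by split=> //; apply: nonneg_mulmx.
Qed.

Lemma in_cone_mulmxl A B y : in_cone B y -> in_cone (A *m B) (A *m y).
Proof. by move=> [x [x0 ->]]; exists x; rewrite mulmxA. Qed.

Lemma closed_in_cone A : A \in unitmx -> closed [set y | in_cone A y].
Proof.
move=> Aunit.
have -> : [set y | in_cone A y] = \bigcap_i [set y | 0 <= \sum_l invmx A i l * y l 0].
  apply/seteqP; split=> y /=; rewrite in_cone_unitmxE //.
    by move=> y0 i _; move: (y0 i); rewrite mxE.
  by move=> y0 i; rewrite mxE; apply: y0.
apply: closed_bigI => i _.
apply: (@preimage_closed _ _ (fun y : 'cV[R]_n => \sum_l invmx A i l * y l 0)
  [set r | 0 <= r]); [move=> y _; apply: continuous_lincomb | exact: closed_ge].
Qed.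

Lemma col_unitmx_neq0 A j : A \in unitmx -> col j A != 0.
Proof.
move=> Aunit; apply/eqP; rewrite colE => /(congr1 (mulmx (invmx A))).
rewrite mulKmx // mulmx0 => /matrixP /(_ j 0).
by rewrite !mxE !eqxx /=; apply/eqP; rewrite oner_eq0.
Qed.

Lemma simplex_normalize x : nonneg_vec x -> x != 0 -> simplex ((\sum_i x i 0)^-1 *: x).
Proof.
move=> x0 xn0.
have sum_gt0 : 0 < \sum_i x i 0.
  rewrite lt_neqAle sumr_ge0 ?andbT // eq_sym; apply: contra xn0 => /eqP sum0.
  apply/eqP/colP => i; rewrite mxE.
  by apply: (psumr_eq0P _ sum0) => // j _; apply: x0.
split=> [i|].
  by rewrite mxE; apply: mulr_ge0; [rewrite invr_ge0 ltW | apply: x0].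
rewrite (eq_bigr (fun i => (\sum_i x i 0)^-1 * x i 0)); last by move=> i _; rewrite mxE.
by rewrite -mulr_sumr mulVf ?gt_eqF.
Qed.

Lemma simplex_neq0 x : simplex x -> x != 0.
Proof.
case=> _; apply: contra_eq_neq => ->.
by rewrite big1 => [|i _]; rewrite ?mxE // eq_sym oner_neq0.
Qed.

End Cones.

Lemma pigeonhole_frequently (T : finType) (P : nat -> T -> Prop) k :
  (forall n, (k <= n)%N -> exists i, P n i) ->
  exists i, forall n, (k <= n)%N -> exists2 m, (n <= m)%N & P m i.
Proof.
move=> HP; apply/not_existsP => never.
have /fin_all_exists [last_n Hlast] : forall i, exists n,
    (k <= n)%N /\ forall m, (n <= m)%N -> ~ P m i.
  move=> i; have /existsNP [n /not_implyP [kn noP]] := never i.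
  by exists n; split=> // m nm Pm; apply: noP; exists m.
pose n := maxn k (\max_i last_n i).
have [i Pni] := HP n (leq_maxl _ _).
apply: (Hlast i).2 Pni; apply: leq_trans (leq_maxr _ _).
exact: leq_bigmax.
Qed.

Lemma totally_irrational_coord_neq0 (R : realType) n (M : 'M[int]_n)
    (v x : 'cV[R]_n) :
  \det M != 0 -> totally_irrational v -> v = map_mx intr M *m x ->
  forall i, x i 0 != 0.
Proof.
move=> detM irr vE i; apply/negP => /eqP xi0.
have adj_row0 l : \adj M i l = 0.
  apply/eqP; rewrite -(intr_eq0 rat); apply/eqP; move: l; apply: irr.
  have : (map_mx intr (\adj M) *m v) i 0 = 0.
    by rewrite map_mx_adj vE mulmxA mul_adj_mx mul_scalar_mx mxE xi0 mulr0.
  rewrite mxE => adjv0; rewrite -[RHS]adjv0.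
  by apply: eq_bigr => l _; rewrite ratr_int [in RHS]mxE.
move/(congr1 (fun A : 'M[int]_n => A i i)): (mul_adj_mx M).
rewrite !mxE big1 ?eqxx ?mulr1n => [/esym/eqP|l _]; first by rewrite (negbTE detM).
by rewrite adj_row0 mul0r.
Qed.

Section DirectiveProducts.
Variables (R : realType) (d : nat) (s : nat -> subst d).
Local Notation N a b := (map_mx (intr : int -> R) (Mprod s a b)).

Lemma Mprod_cat a b c : (a <= b <= c)%N -> Mprod s a c = Mprod s a b *m Mprod s b c.
Proof. by case/andP=> ab bc; rewrite /Mprod (big_cat_nat ab bc) mulmxE. Qed.

Lemma Mprod_ge0 a b i j : 0 <= Mprod s a b i j.
Proof.
rewrite /Mprod; elim/big_ind: _ i j => [i j|A B A0 B0 i j|l _ i j].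
- by rewrite mxE ler0n.
- by rewrite -mulmxE mxE; apply: sumr_ge0 => l _; apply: mulr_ge0.
- by rewrite mxE.
Qed.

Lemma map_Mprod_ge0 a b i j : 0 <= N a b i j.
Proof. by rewrite mxE ler0z Mprod_ge0. Qed.

Lemma map_Mprod_cat a b c : (a <= b <= c)%N -> N a c = N a b *m N b c.
Proof. by move=> abc; rewrite (Mprod_cat abc) map_mxM. Qed.

Lemma in_cone_map_Mprod_decr a m n y :
  (a <= m <= n)%N -> in_cone (N a n) y -> in_cone (N a m) y.
Proof.
case/andP=> am mn; rewrite (@map_Mprod_cat a m n) ?am //.
by apply: in_cone_mulmxr; apply: map_Mprod_ge0.
Qed.

Lemma in_all_cones_prefix a k y : (a <= k)%N -> nonneg_vec y ->
  (forall n, (k <= n)%N -> in_cone (N k n) y) ->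
  forall n, (a <= n)%N -> in_cone (N a n) (N a k *m y).
Proof.
move=> ak y0 ycones n an; case: (leqP k n) => [kn|nk].
  by rewrite (@map_Mprod_cat a k n) ?ak //; apply: in_cone_mulmxl; apply: ycones.
rewrite (@map_Mprod_cat a n k) ?an 1?ltnW // -mulmxA.
by exists (N n k *m y); split=> //; apply: nonneg_mulmx => // i j; apply: map_Mprod_ge0.
Qed.

Lemma zero_row_frequently k :
  (forall n, (k <= n)%N -> ~ positive_mx (Mprod s k n)) ->
  exists i, forall n, (k <= n)%N -> exists2 m, (n <= m)%N & exists j, Mprod s k m i j = 0.
Proof.
move=> not_pos; apply: pigeonhole_frequently => n kn.
have /existsNP [i /existsNP [j Mij]] := not_pos n kn.
by exists i, j; apply/eqP; rewrite eq_le Mprod_ge0 andbT leNgt; apply/negP.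
Qed.

Section Unimodular.
Variable S : seq (subst d).
Hypothesis S_unimodular : forall sigma, sigma \in S -> unimodular sigma.
Hypothesis s_in_S : forall k, s k \in S.

Lemma Mprod_det_unit a b : \det (Mprod s a b) \is a GRing.unit.
Proof.
rewrite /Mprod; elim/big_ind: _ => [|A B Aunit Bunit|l _].
- by rewrite det1 unitr1.
- by rewrite -mulmxE det_mulmx unitrM Aunit.
- by case: (S_unimodular (s_in_S l)) => ->; rewrite ?unitrN1 ?unitr1.
Qed.

Lemma map_Mprod_unit a b : N a b \in unitmx.
Proof. by rewrite unitmxE det_map_mx rmorph_unit ?Mprod_det_unit. Qed.

Lemma face_point_in_all_cones k i :
  (forall n, (k <= n)%N -> exists2 m, (n <= m)%N & exists j, Mprod s k m i j = 0) ->
  exists y, [/\ nonneg_vec y, y != 0, y i 0 = 0 &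
    forall n, (k <= n)%N -> in_cone (N k n) y].
Proof.
move=> zero_i.
pose F n := [set y : 'cV[R]_d.+1 | in_cone (N k (k + n)%N) y /\ y i 0 = 0].
have [y [ysimplex yF]] : @simplex R d.+1 `&` \bigcap_n F n !=set0.
  apply: compact_decreasing_bigcap; first exact: simplex_compact.
  - move=> n; apply: closedI; first exact/closed_in_cone/map_Mprod_unit.
    by apply: (@preimage_closed _ _ (fun y : 'cV[R]_d.+1 => y i 0) [set r | r = 0]);
      [move=> y _; apply: coord_continuous | apply: closed_eq].
  - move=> m n mn y [ycone yi0]; split=> //.
    by apply: in_cone_map_Mprod_decr ycone; rewrite leq_addr leq_add2l.
  - move=> n; have [m nm [j Mij0]] := zero_i (k + n)%N (leq_addr _ _).
    pose c := col j (N k m).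
    have c0 : nonneg_vec c by move=> l; rewrite mxE map_Mprod_ge0.
    have cn0 : c != 0 := col_unitmx_neq0 j (map_Mprod_unit k m).
    exists ((\sum_l c l 0)^-1 *: c); split; first exact: simplex_normalize.
    split; last by rewrite !mxE Mij0 mulr0.
    apply: (@in_cone_map_Mprod_decr k (k + n)%N m); first by rewrite leq_addr.
    exists ((\sum_l c l 0)^-1 *: delta_mx j 0); split; last by rewrite -scalemxAr -colE.
    move=> l; rewrite !mxE; apply: mulr_ge0; last exact: ler0n.
    by rewrite invr_ge0 sumr_ge0.
exists y; split; [by case: ysimplex | exact: simplex_neq0 | by case: (yF 0%N I) |].
by move=> n kn; have [] := yF (n - k)%N I; rewrite subnKC.
Qed.

End Unimodular.
End DirectiveProducts.

Local Close Scope classical_set_scope.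

Theorem lemma3p30 (R : realType) (d : nat) (S : seq (subst d))
  (HS : forall sigma, sigma \in S -> unimodular sigma)
  (s : nat -> subst d) (Hs : forall k, s k \in S)
  (v : 'cV[R]_d.+1) (Hv0 : nonneg_vec v) (Hirr : totally_irrational v)
  (Hcone : forall y : 'cV[R]_d.+1,
     (forall n, in_cone (map_mx intr (Mprod s 0 n)) y) <->
     (exists t : R, 0 <= t /\ y = t *: v)) :
  forall k : nat, exists n : nat, (k <= n)%N /\ positive_mx (Mprod s k n).
Proof.
move=> k; apply/not_existsP => never_pos.
have [i zero_i] := zero_row_frequently (fun n kn pos => never_pos n (conj kn pos)).
have [y [y0 y_neq0 yi0 ycones]] := face_point_in_all_cones R HS Hs zero_i.
pose N0k := map_mx (intr : int -> R) (Mprod s 0 k).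
have N0k_unit : N0k \in unitmx := map_Mprod_unit R HS Hs 0 k.
have [t [_ ytv]] : exists t : R, 0 <= t /\ N0k *m y = t *: v.
  by apply/Hcone => n; apply: (in_all_cones_prefix (leq0n k)).
have t_neq0 : t != 0.
  by apply: contra_neq y_neq0 => t0; rewrite -(mulKmx N0k_unit y) ytv t0 scale0r mulmx0.
have vE : v = N0k *m (t^-1 *: y) by rewrite -scalemxAr ytv scalerA mulVf ?scale1r.
have det_neq0 : \det (Mprod s 0 k) != 0.
  by apply/eqP => det0; move: (Mprod_det_unit HS Hs 0 k); rewrite det0 unitr0.
have := totally_irrational_coord_neq0 det_neq0 Hirr vE i.
by rewrite mxE yi0 mulr0 eqxx.
Qed.
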